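(* Let $A_1,\dots,A_m\in\mathbb{R}^{n\times n}$ be real symmetric matrices and fix $t\ge1$. The map sending an ordered orthogonal simultaneous block decomposition $(V_1,\dots,V_t)$ of $A_1,\dots,A_m$ to $(\epsilon_1,\dots,\epsilon_t)$, where $\epsilon_j$ is the orthogonal projection of $\mathbb{R}^n$ onto $V_j$, is a bijection onto the set of ordered complete sets of $t$ orthogonal idempotents $(\epsilon_1,\dots,\epsilon_t)$ of $Z(A_1,\dots,A_m)$ in which every $\epsilon_j$ is symmetric ($\epsilon_j^T=\epsilon_j$). In particular, there exist an orthogonal matrix $Q\in\mathrm{O}_n(\mathbb{R})$ and positive integers $n_1,\dots,n_t$ with $\sum_j n_j=n$ such that every $Q^TA_iQ$ is block diagonal with diagonal blocks of sizes $n_1,\dots,n_t$ if and only if $Z(A_1,\dots,A_m)$ contains a complete set of $t$ orthogonal idempotents all of which are symmetric matrices.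
   Context: The center is $Z(A_1,\dots,A_m)=\{X\in\mathbb{R}^{n\times n} : (A_iX)^T=A_iX \text{ for all } i\}$. An ordered orthogonal simultaneous block decomposition of length $t$ of $A_1,\dots,A_m$ is a $t$-tuple $(V_1,\dots,V_t)$ of nonzero subspaces of $\mathbb{R}^n$, pairwise orthogonal with respect to the standard inner product, with $\mathbb{R}^n=V_1\oplus\cdots\oplus V_t$ and $x^TA_iy=0$ for all $i$, all $j\neq l$, $x\in V_j$, $y\in V_l$. An ordered complete set of $t$ orthogonal idempotents of $Z(A_1,\dots,A_m)$ is a $t$-tuple of nonzero matrices $\epsilon_1,\dots,\epsilon_t\in Z(A_1,\dots,A_m)$ with $\epsilon_j^2=\epsilon_j$, $\epsilon_j\epsilon_l=0$ for $j\neq l$, and $\sum_j\epsilon_j=I_n$. *)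

From HB Require Import structures.
From mathcomp Require Import all_boot all_order all_algebra.
From mathcomp Require Import reals.
From Stdlib Require Import ClassicalEpsilon.
Set Implicit Arguments. Unset Strict Implicit. Unset Printing Implicit Defensive.
Import Order.TTheory GRing.Theory Num.Theory.
Local Open Scope ring_scope.

Section Defs.
Variables (R : realType) (n m t : nat).

Definition dotv (x y : 'cV[R]_n) : R := (x^T *m y) 0 0.

Definition bform (A : 'M[R]_n) (x y : 'cV[R]_n) : R := (x^T *m A *m y) 0 0.

(* the center  Z(A_1,...,A_m) = { X | (A_i X)^T = A_i X for all i } *)
Definition in_center (A : 'I_m -> 'M[R]_n) (X : 'M[R]_n) : Prop :=
  forall i, (A i *m X)^T = A i *m X.

Definition is_orthproj (V : {vspace 'cV[R]_n}) (P : 'M[R]_n) : Prop :=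
  (forall x : 'cV[R]_n, P *m x \in V) /\
  (forall x v : 'cV[R]_n, v \in V -> dotv (x - P *m x) v = 0).

(* the orthogonal projection onto V (it exists and is unique) *)
Definition orthproj (V : {vspace 'cV[R]_n}) : 'M[R]_n :=
  epsilon (inhabits 0) (is_orthproj V).

Definition is_oosbd (A : 'I_m -> 'M[R]_n) (Vs : {ffun 'I_t -> {vspace 'cV[R]_n}}) : Prop :=
  [/\ (forall j, Vs j != 0%VS),
      (forall j l, j != l -> forall x y, x \in Vs j -> y \in Vs l -> dotv x y = 0),
      (\sum_(j < t) Vs j)%VS = fullv,
      directv (\sum_(j < t) Vs j)
    & (forall i j l, j != l -> forall x y, x \in Vs j -> y \in Vs l -> bform (A i) x y = 0)].

Definition is_ocsoi (A : 'I_m -> 'M[R]_n) (eps : {ffun 'I_t -> 'M[R]_n}) : Prop :=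
  [/\ (forall j, eps j != 0),
      (forall j, in_center A (eps j)),
      (forall j, eps j *m eps j = eps j),
      (forall j l, j != l -> eps j *m eps l = 0)
    & \sum_(j < t) eps j = 1%:M].

Definition proj_tuple (Vs : {ffun 'I_t -> {vspace 'cV[R]_n}}) : {ffun 'I_t -> 'M[R]_n} :=
  [ffun j => orthproj (Vs j)].

Definition in_block (ns : 'I_t -> nat) (j : 'I_t) (r : nat) : Prop :=
  (\sum_(k < t | (k < j)%N) ns k <= r < \sum_(k < t | (k < j)%N) ns k + ns j)%N.

Definition block_diag (ns : 'I_t -> nat) (M : 'M[R]_n) : Prop :=
  forall r c : 'I_n, M r c != 0 -> exists j, in_block ns j r /\ in_block ns j c.

End Defs.

From HB Require Import structures.
From mathcomp Require Import all_boot all_order all_algebra.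
From mathcomp Require Import reals.
From Stdlib Require Import ClassicalEpsilon.
Set Implicit Arguments. Unset Strict Implicit. Unset Printing Implicit Defensive.
Import Order.TTheory GRing.Theory Num.Theory.
Local Open Scope ring_scope.

(* A symmetric idempotent is the orthogonal projection onto its image, and a subspace is
   determined by its orthogonal projection. If the V_j form an orthogonal decomposition of R^n
   that is also A_i-orthogonal, their projections e_j annihilate each other, sum to 1 and satisfy
   x^T A_i e_j y = (e_j x)^T A_i (e_j y); the right side is symmetric in x and y, so A_i e_j is
   symmetric. Conversely, for symmetric orthogonal idempotents e_j of the center we get
   e_j A_i = (A_i e_j)^T = A_i e_j, so their images are orthogonal and A_i-orthogonal.
   For the block form, Gram-Schmidt factors each e_j = B_j^T B_j with B_j B_j^T = 1; taking the
   rows of all the B_j as the columns of Q gives an orthogonal matrix, and the (j, l) block of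
   Q^T A_i Q is B_j e_j A_i e_l B_l^T = 0 for j <> l. Conversely, the coordinate projections onto
   the blocks, conjugated by Q, are symmetric orthogonal idempotents commuting with the A_i. *)

Section OrthogonalProjection.
Variables (R : realType) (n : nat).
Implicit Types (M N P : 'M[R]_n) (x y v w : 'cV[R]_n) (U V : {vspace 'cV[R]_n}).

Lemma mx_col_ext M N : (forall x, M *m x = N *m x) -> M = N.
Proof.
move=> eqMN; apply/matrixP => i j.
have := congr1 (fun X : 'cV[R]_n => X i 0) (eqMN (delta_mx j 0)).
by rewrite -!colE !mxE.
Qed.

Lemma mx_bform_ext M N : (forall x y, bform M x y = bform N x y) -> M = N.
Proof.
move=> eqMN; apply/matrixP => i j.
have := eqMN (delta_mx i 0) (delta_mx j 0).
by rewrite /bform trmx_delta -!rowE -!colE !mxE.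
Qed.

Lemma bformC M x y : M^T = M -> bform M x y = bform M y x.
Proof.
move=> MT; rewrite /bform; have -> : x^T *m M *m y = (y^T *m M *m x)^T.
  by rewrite !trmx_mul MT trmxK mulmxA.
by rewrite mxE.
Qed.

Lemma bform_sumr M x (I : finType) (y : I -> 'cV[R]_n) :
  bform M x (\sum_l y l) = \sum_l bform M x (y l).
Proof. by rewrite /bform mulmx_sumr summxE. Qed.

Lemma dotvBl x y v : dotv (x - y) v = dotv x v - dotv y v.
Proof. by rewrite /dotv !mxE -sumrB; apply: eq_bigr => k _; rewrite !mxE mulrBl. Qed.

Lemma dotv_ge0 x : 0 <= dotv x x.
Proof. by rewrite /dotv mxE; apply: sumr_ge0 => k _; rewrite mxE -expr2 sqr_ge0. Qed.

Lemma dotv_self_eq0 x : dotv x x = 0 -> x = 0.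
Proof.
rewrite /dotv mxE => x0; apply/matrixP => i j; rewrite ord1 mxE.
have sq_ge0 (k : 'I_n) : 0 <= x^T 0 k * x k 0 by rewrite mxE -expr2 sqr_ge0.
have := psumr_eq0P (fun k _ => sq_ge0 k) x0 (i := i) isT.
by rewrite mxE -expr2 => /eqP; rewrite sqrf_eq0 => /eqP.
Qed.

Definition sym_idem_for V P :=
  [/\ P^T = P, P *m P = P & forall x, (x \in V) = (P *m x == x)].

Lemma sym_idem_add_line U P v :
  sym_idem_for U P -> exists P', sym_idem_for (<[v]> + U)%VS P'.
Proof.
case=> PT PP Pfix; set w := v - P *m v.
have Pw : P *m w = 0 by rewrite mulmxBr mulmxA PP subrr.
have wP : w^T *m P = 0 by rewrite -PT -trmx_mul Pw trmx0.
have PU z : P *m z \in U by rewrite Pfix mulmxA PP.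
have [w0|wn0] := eqVneq w 0.
  have vU : v \in U by rewrite Pfix; apply/eqP/esym/subr0_eq.
  by exists P; move: vU; rewrite memvE => /addv_idPr ->.
(* add the rank-one projection onto the component of v orthogonal to U *)
set c := (w^T *m w) 0 0.
have c0 : c != 0 by apply: contra wn0 => /eqP /dotv_self_eq0 ->.
have wTw : w^T *m w = c%:M by rewrite [LHS]mx11_scalar.
set W := w *m w^T.
have PW : P *m W = 0 by rewrite mulmxA Pw mul0mx.
have WP : W *m P = 0 by rewrite -mulmxA wP mulmx0.
have WW : W *m W = c *: W.
  by rewrite /W mulmxA -(mulmxA w) wTw mul_mx_scalar -scalemxAl.
set P' := P + c^-1 *: W.
have P'U z : P *m z = z -> P' *m z = z.
  move=> Pz; have wz : w^T *m z = 0 by rewrite -Pz mulmxA wP mul0mx.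
  by rewrite mulmxDl -scalemxAl /W -mulmxA wz mulmx0 scaler0 addr0.
have P'v : P' *m v = v.
  have wv : w^T *m v = c%:M.
    by rewrite -{1}(subrK (P *m v) v) -/w mulmxDr wTw mulmxA wP mul0mx addr0.
  rewrite mulmxDl -scalemxAl /W -mulmxA wv mul_mx_scalar scalerA mulVf // scale1r.
  by rewrite /w addrC subrK.
exists P'; split.
- by rewrite linearD linearZ /= trmx_mul trmxK PT.
- rewrite mulmxDl !mulmxDr PP -!scalemxAr -!scalemxAl PW WP WW.
  by rewrite !scaler0 !addr0 !scalerA add0r divfK.
move=> x; apply/idP/eqP.
  case/memv_addP => y /vlineP [k ->] [z zU ->].
  by rewrite mulmxDr -scalemxAr P'v P'U //; apply/eqP; rewrite -Pfix.
move=> <-; rewrite mulmxDl; apply: memvD; first exact: (subvP (addvSr _ _)).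
have wvU : w \in (<[v]> + U)%VS.
  by apply: memvB; [apply: (subvP (addvSl _ _)); apply: memv_line | exact: (subvP (addvSr _ _))].
rewrite -scalemxAl /W -mulmxA [w^T *m x]mx11_scalar mul_mx_scalar.
by apply: memvZ; apply: memvZ.
Qed.

Lemma sym_idem_span (s : seq 'cV[R]_n) : exists P, sym_idem_for <<s>>%VS P.
Proof.
elim: s => [|v s [P sP]]; last by rewrite span_cons; exact: sym_idem_add_line sP.
exists 0; split; first exact: trmx0.
  by rewrite mul0mx.
by move=> x; rewrite span_nil memv0 mul0mx eq_sym.
Qed.

Lemma sym_idem_is_orthproj V P : sym_idem_for V P -> is_orthproj V P.
Proof.
case=> PT PP Pfix; split=> [x|x v]; first by rewrite Pfix mulmxA PP.
rewrite Pfix => /eqP Pv; rewrite /dotv -Pv linearB /= mulmxBl.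
by rewrite trmx_mul PT !mulmxA -(mulmxA _ P P) PP subrr mxE.
Qed.

Lemma orthproj_uniq V P P' : is_orthproj V P -> is_orthproj V P' -> P = P'.
Proof.
move=> [PV Pperp] [P'V P'perp]; apply: mx_col_ext => x; apply/eqP.
rewrite -subr_eq0; apply/eqP/dotv_self_eq0.
have dV : P *m x - P' *m x \in V by apply: memvB.
have dE : P *m x - P' *m x = (x - P' *m x) - (x - P *m x).
  by rewrite [RHS]addrC opprB addrA subrK.
by rewrite {1}dE dotvBl P'perp ?Pperp ?subrr.
Qed.

Lemma orthprojE V P : sym_idem_for V P -> orthproj V = P.
Proof.
move=> /sym_idem_is_orthproj VP.
exact: orthproj_uniq (epsilon_spec _ _ (ex_intro _ P VP)) VP.
Qed.

Lemma orthprojP V : sym_idem_for V (orthproj V).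
Proof.
have [P] := sym_idem_span (vbasis V); rewrite (span_basis (vbasisP V)).
by move=> VP; rewrite (orthprojE VP).
Qed.

Lemma orthproj_sym V : (orthproj V)^T = orthproj V.
Proof. by case: (orthprojP V). Qed.

Lemma orthproj_idem V : orthproj V *m orthproj V = orthproj V.
Proof. by case: (orthprojP V). Qed.

Lemma mem_orthproj V x : (x \in V) = (orthproj V *m x == x).
Proof. by case: (orthprojP V). Qed.

Lemma orthproj_mem V x : orthproj V *m x \in V.
Proof. by rewrite mem_orthproj mulmxA orthproj_idem. Qed.

Definition mximv P : {vspace 'cV[R]_n} := limg (linfun (mulmx P)).

Lemma mem_mximv P x : P *m P = P -> (x \in mximv P) = (P *m x == x).
Proof.
move=> PP; apply/memv_imgP/eqP => [[y _ ->]|<-].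
  by rewrite lfunE /= mulmxA PP.
by exists x; rewrite ?memvf // lfunE.
Qed.

Lemma sym_idem_mximv P : P^T = P -> P *m P = P -> sym_idem_for (mximv P) P.
Proof. by move=> PT PP; split=> // x; rewrite mem_mximv. Qed.

End OrthogonalProjection.

Lemma center_sym_comm (R : realType) (n : nat) (A E : 'M[R]_n) :
  A^T = A -> E^T = E -> (A *m E)^T = A *m E -> E *m A = A *m E.
Proof. by move=> AT ET AE; rewrite -[RHS]AE trmx_mul ET AT. Qed.

Section DecompositionToIdempotents.
Variables (R : realType) (n m t : nat) (A : 'I_m -> 'M[R]_n).
Hypothesis symA : forall i, (A i)^T = A i.
Variable Vs : {ffun 'I_t -> {vspace 'cV[R]_n}}.
Hypothesis Vs_oosbd : is_oosbd A Vs.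
Local Notation P j := (orthproj (Vs j)).
Implicit Types x y : 'cV[R]_n.

Lemma orthproj_cross j l y : j != l -> y \in Vs l -> P j *m y = 0.
Proof.
move=> jl yl; case: Vs_oosbd => _ orth _ _ _; apply: dotv_self_eq0.
have -> : dotv (P j *m y) (P j *m y) = dotv y (P j *m y).
  by rewrite /dotv trmx_mul orthproj_sym -mulmxA (mulmxA (P j)) orthproj_idem.
by apply: (orth l j) => //; [rewrite eq_sym | exact: orthproj_mem].
Qed.

Lemma sum_orthproj x : \sum_j P j *m x = x.
Proof.
case: Vs_oosbd => _ _ full _ _.
have : x \in (\sum_(j < t) Vs j)%VS by rewrite full memvf.
case/memv_sumP => vs vsV ->; apply: eq_bigr => j _.
rewrite mulmx_sumr (bigD1 j) //= big1 ?addr0; first by apply/eqP; rewrite -mem_orthproj vsV.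
by move=> l lj; apply: orthproj_cross; [rewrite eq_sym | exact: vsV].
Qed.

(* Only the j-th component of x pairs with V_j under each A_i. *)
Lemma bform_orthproj i j x y :
  bform (A i) x (P j *m y) = bform (A i) (P j *m x) (P j *m y).
Proof.
rewrite bformC // -{1}(sum_orthproj x) bform_sumr (bigD1 j) //= big1 ?addr0.
  by rewrite bformC.
move=> l lj; rewrite bformC //; case: Vs_oosbd => _ _ _ _ Aorth.
by apply: (Aorth i l j); rewrite ?orthproj_mem.
Qed.

Lemma orthproj_in_center j : in_center A (P j).
Proof.
move=> i; apply: mx_bform_ext => x y.
have PxA : bform ((A i *m P j)^T) x y = bform (A i) (P j *m x) y.
  by rewrite /bform trmx_mul symA orthproj_sym trmx_mul orthproj_sym !mulmxA.
have APy : bform (A i *m P j) x y = bform (A i) x (P j *m y).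
  by rewrite /bform !mulmxA.
by rewrite PxA APy bform_orthproj bformC // bform_orthproj bformC.
Qed.

Lemma oosbd_proj_tuple :
  is_ocsoi A (proj_tuple Vs) /\ (forall j, (proj_tuple Vs j)^T = proj_tuple Vs j).
Proof.
split; last by move=> j; rewrite ffunE orthproj_sym.
split=> [j|j|j|j l jl|]; rewrite ?ffunE.
- case: Vs_oosbd => Vs_neq0 _ _ _ _.
  have := memv_pick (Vs j); rewrite mem_orthproj; apply: contraTneq => ->.
  by rewrite mul0mx eq_sym vpick0 (negbTE (Vs_neq0 j)).
- exact: orthproj_in_center.
- exact: orthproj_idem.
- apply: mx_col_ext => x.
  by rewrite -mulmxA (@orthproj_cross j l) ?mul0mx ?orthproj_mem.
- apply: mx_col_ext => x; rewrite mul1mx mulmx_suml -{2}(sum_orthproj x).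
  by apply: eq_bigr => j _; rewrite ffunE.
Qed.

End DecompositionToIdempotents.

Lemma proj_tuple_inj (R : realType) (n t : nat) (Vs Ws : {ffun 'I_t -> {vspace 'cV[R]_n}}) :
  proj_tuple Vs = proj_tuple Ws -> Vs = Ws.
Proof.
move=> VW; apply/ffunP => j; apply/vspaceP => x.
have := congr1 (fun f : {ffun _ -> _} => f j) VW; rewrite !ffunE => VWj.
by rewrite !mem_orthproj VWj.
Qed.

Lemma ocsoi_oosbd (R : realType) (n m t : nat) (A : 'I_m -> 'M[R]_n)
    (eps : {ffun 'I_t -> 'M[R]_n}) :
  (forall i, (A i)^T = A i) -> is_ocsoi A eps -> (forall j, (eps j)^T = eps j) ->
  exists Vs : {ffun 'I_t -> {vspace 'cV[R]_n}}, is_oosbd A Vs /\ proj_tuple Vs = eps.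
Proof.
move=> symA [eps_neq0 cen idem orth sum1] sym.
pose Vs := [ffun j => mximv (eps j)].
have memVs j x : (x \in Vs j) = (eps j *m x == x) by rewrite ffunE mem_mximv.
have memVsE j x : x \in Vs j -> x = eps j *m x by rewrite memVs => /eqP ->.
exists Vs; split; last first.
  by apply/ffunP => j; rewrite !ffunE; apply/orthprojE/sym_idem_mximv.
split.
- move=> j; apply: contra (eps_neq0 j) => /eqP Vs0; apply/eqP/mx_col_ext => x.
  have : eps j *m x \in Vs j by rewrite memVs mulmxA idem.
  by rewrite Vs0 memv0 mul0mx => /eqP.
- move=> j l jl x y /memVsE -> /memVsE ->.
  by rewrite /dotv trmx_mul sym -mulmxA (mulmxA (eps j)) orth // mul0mx mulmx0 mxE.
- apply/vspaceP => x; rewrite memvf; apply/memv_sumP.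
  exists (fun j => eps j *m x) => [j _|]; first by rewrite memVs mulmxA idem.
  by rewrite -mulmx_suml sum1 mul1mx.
- apply/directv_sum_independent => us usVs us0 j _.
  have <- : eps j *m \sum_(l < t) us l = us j.
    rewrite mulmx_sumr (bigD1 j) //= big1 ?addr0; first by rewrite -memVsE ?usVs.
    by move=> l lj; rewrite (memVsE l (us l)) ?usVs // mulmxA orth ?mul0mx // eq_sym.
  by rewrite us0 mulmx0.
- move=> i j l jl x y /memVsE -> /memVsE ->.
  rewrite /bform trmx_mul sym -!mulmxA (mulmxA (A i)) -(center_sym_comm _ _ (cen l i)) //.
  by rewrite (mulmxA (eps j)) (mulmxA (eps j)) orth // !mul0mx mulmx0 mxE.
Qed.

Section SymmetricIdempotentFactor.
Variables (R : realType) (n : nat).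
Implicit Types E : 'M[R]_n.

Lemma sym_idem_unit_vector E : E^T = E -> E *m E = E -> E != 0 ->
  exists u : 'cV[R]_n, u^T *m u = 1%:M /\ E *m u = u.
Proof.
move=> ET EE E_neq0.
have [i v_neq0] : exists i : 'I_n, E *m (delta_mx i 0 : 'cV[R]_n) != 0.
  apply/existsP; apply: contraR E_neq0; rewrite negb_exists => /forallP Ecol0.
  apply/eqP/matrixP => a b; have := Ecol0 b; rewrite negbK -colE => /eqP /colP /(_ a).
  by rewrite !mxE.
set v := E *m delta_mx i 0 in v_neq0.
have c_gt0 : 0 < dotv v v.
  by rewrite lt_def dotv_ge0 andbT; apply: contra v_neq0 => /eqP /dotv_self_eq0 ->.
set s := Num.sqrt (dotv v v).
have s_neq0 : s != 0 by rewrite gt_eqF // sqrtr_gt0.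
exists (s^-1 *: v); split; last by rewrite -scalemxAr mulmxA EE.
have -> : (s^-1 *: v)^T = s^-1 *: v^T by exact: linearZ.
rewrite -scalemxAl -scalemxAr [v^T *m v]mx11_scalar scalerA -invfM -expr2.
rewrite sqr_sqrtr ?dotv_ge0 // -scalemx1 scalerA mulVf ?scale1r //.
by rewrite gt_eqF.
Qed.

Lemma sym_idem_factor E : E^T = E -> E *m E = E ->
  exists r (B : 'M[R]_(r, n)), B *m B^T = 1%:M /\ B^T *m B = E.
Proof.
move: {2}(\rank E) (leqnn (\rank E)) => k; elim: k E => [|k IHk] E rkE ET EE.
  exists 0%N, 0; split; first by apply/matrixP => [[]].
  by rewrite trmx0 mul0mx; apply/eqP; rewrite eq_sym -mxrank_eq0 -leqn0.
have [->|E_neq0] := eqVneq E 0.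
  by exists 0%N, 0; split; [apply/matrixP => [[]] | rewrite trmx0 mul0mx].
have [u [uTu Eu]] := sym_idem_unit_vector ET EE E_neq0.
(* split off the line through u, which lowers the rank *)
set E' := E - u *m u^T.
have uE : u^T *m E = u^T by rewrite -{1}ET -trmx_mul Eu.
have E'T : E'^T = E' by rewrite /E' linearB /= trmx_mul trmxK ET.
have E'u : E' *m u = 0 by rewrite /E' mulmxBl Eu -mulmxA uTu mulmx1 subrr.
have E'E : E' *m E = E' by rewrite /E' mulmxBl EE -mulmxA uE.
have E'E' : E' *m E' = E' by rewrite {2}/E' mulmxBr E'E mulmxA E'u mul0mx subr0.
have rkE' : (\rank E' <= k)%N.
  rewrite -ltnS; apply: leq_trans rkE; apply: rank_ltmx; rewrite ltmxE.
  rewrite -{1}E'E submxMl /=; apply/submxP => -[D eD].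
  have u_neq0 : u != 0.
    apply: contra_eqN uTu => /eqP ->; rewrite trmx0 mul0mx.
    by apply/eqP => /matrixP /(_ 0 0) /eqP; rewrite !mxE eqxx /= eq_sym oner_eq0.
  by move: u_neq0; rewrite -Eu eD -mulmxA E'u mulmx0 eqxx.
have [r [B' [B'B' B'TB']]] := IHk E' rkE' E'T E'E'.
have B'E' : B' *m E' = B' by rewrite -B'TB' mulmxA B'B' mul1mx.
have B'u : B' *m u = 0 by rewrite -B'E' -mulmxA E'u mulmx0.
exists (1 + r)%N, (col_mx u^T B'); split.
  rewrite tr_col_mx trmxK mul_col_row uTu B'u B'B' -(trmxK u) -trmx_mul trmxK B'u.
  by rewrite trmx0 -scalar_mx_block.
by rewrite tr_col_mx trmxK mul_row_col B'TB' /E' addrC subrK.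
Qed.

End SymmetricIdempotentFactor.

Section Blocks.
Variables (R : realType) (n t : nat) (ns : 'I_t -> nat).
Hypothesis sum_ns : (\sum_(j < t) ns j)%N = n.
Local Open Scope nat_scope.

Definition block_cast (r : 'I_n) : 'I_(\sum_(j < t) ns j) := cast_ord (esym sum_ns) r.
Definition block_of (r : 'I_n) : 'I_t := tagnat.sig1 (block_cast r).

Lemma tagnat_valE (s : 'I_(\sum_(j < t) ns j)) :
  s = \sum_(i < t | i < tagnat.sig1 s) ns i + tagnat.sig2 s :> nat.
Proof. by rewrite -[in LHS](tagnat.sigK s) tagnat.rankEsum. Qed.

Lemma in_block_of (r : 'I_n) : in_block ns (block_of r) r.
Proof.
rewrite /in_block /block_of; have -> : (r : nat) = block_cast r by [].
by rewrite tagnat_valE leq_addr /= ltn_add2l.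
Qed.

Lemma block_end_leq_start (j l : 'I_t) : j < l ->
  \sum_(k < t | k < j) ns k + ns j <= \sum_(k < t | k < l) ns k.
Proof.
move=> jl; rewrite [X in _ <= X](bigD1 j) //= [X in X <= _]addnC leq_add2l.
rewrite big_mkcond [X in _ <= X]big_mkcond /=; apply: leq_sum => k _.
case: ifP => // kj; rewrite (ltn_trans kj jl) /=.
by case: eqP => // kj_eq; move: kj; rewrite kj_eq ltnn.
Qed.

Lemma in_block_uniq (j l : 'I_t) (r : nat) :
  in_block ns j r -> in_block ns l r -> j = l.
Proof.
move=> /andP [jr rj] /andP [lr rl]; case: (ltngtP j l) => [jl|lj|/val_inj //].
  by have := leq_trans rj (leq_trans (block_end_leq_start jl) lr); rewrite ltnn.
by have := leq_trans rl (leq_trans (block_end_leq_start lj) jr); rewrite ltnn.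
Qed.

Lemma in_blockP (j : 'I_t) (r : 'I_n) : in_block ns j r <-> block_of r = j.
Proof.
by split=> [/(in_block_uniq (in_block_of r))|<-] //; exact: in_block_of.
Qed.

Lemma block_of_surj (j : 'I_t) : 0 < ns j -> exists r, block_of r = j.
Proof.
move=> ns_gt0; exists (cast_ord sum_ns (@tagnat.Rank _ ns j (Ordinal ns_gt0))).
by rewrite /block_of /block_cast cast_ordK tagnat.Rank1K.
Qed.

End Blocks.

Section BlockDiagonalToIdempotents.
Variables (R : realType) (n m t : nat) (A : 'I_m -> 'M[R]_n).
Hypothesis symA : forall i, (A i)^T = A i.
Variables (Q : 'M[R]_n) (ns : 'I_t -> nat).
Hypotheses (QTQ : Q^T *m Q = 1%:M) (ns_gt0 : forall j, (0 < ns j)%N)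
  (sum_ns : (\sum_(j < t) ns j)%N = n)
  (Ablock : forall i, block_diag ns (Q^T *m A i *m Q)).

Definition block_idem (j : 'I_t) : 'M[R]_n :=
  diag_mx (\row_r (block_of sum_ns r == j)%:R).

Lemma block_idem_idem j : block_idem j *m block_idem j = block_idem j.
Proof.
rewrite mulmx_diag; congr diag_mx; apply/rowP => r; rewrite !mxE.
by case: eqP; rewrite ?mulr1 ?mulr0.
Qed.

Lemma block_idem_orth j l : j != l -> block_idem j *m block_idem l = 0.
Proof.
move=> jl; rewrite mulmx_diag; apply/matrixP => r c; rewrite !mxE.
have [->|] := eqVneq (block_of sum_ns r) j; last by rewrite mul0r mul0rn.
by rewrite (negbTE jl) mulr0 mul0rn.
Qed.

Lemma sum_block_idem : \sum_j block_idem j = 1%:M.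
Proof.
apply/matrixP => r c; rewrite summxE !mxE (bigD1 (block_of sum_ns r)) //= big1 ?addr0.
  by rewrite !mxE eqxx.
by move=> j jr; rewrite !mxE eq_sym (negbTE jr) mul0rn.
Qed.

Lemma block_idem_neq0 j : block_idem j != 0.
Proof.
have [r <-] := block_of_surj sum_ns (ns_gt0 j).
apply/eqP => /matrixP /(_ r r); rewrite !mxE !eqxx mulr1n => /eqP.
by rewrite oner_eq0.
Qed.

Lemma block_idem_comm i j :
  (Q^T *m A i *m Q) *m block_idem j = block_idem j *m (Q^T *m A i *m Q).
Proof.
set M := Q^T *m A i *m Q.
rewrite mul_mx_diag mul_diag_mx; apply/matrixP => r c; rewrite [LHS]mxE [RHS]mxE.
have [->|Mrc_neq0] := eqVneq (M r c) 0; first by rewrite mulr0 mul0r.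
have [k [kr kc]] := Ablock Mrc_neq0.
by rewrite !mxE (proj1 (in_blockP sum_ns k r) kr) (proj1 (in_blockP sum_ns k c) kc) mulrC.
Qed.

Lemma block_diag_ocsoi : exists eps : {ffun 'I_t -> 'M[R]_n},
  is_ocsoi A eps /\ (forall j, (eps j)^T = eps j).
Proof.
have QQT : Q *m Q^T = 1%:M by apply: mulmx1C.
have conjM X Y : (Q *m X *m Q^T) *m (Q *m Y *m Q^T) = Q *m (X *m Y) *m Q^T.
  by rewrite !mulmxA -(mulmxA _ Q^T Q) QTQ mulmx1.
exists [ffun j => Q *m block_idem j *m Q^T].
have symE j : (Q *m block_idem j *m Q^T)^T = Q *m block_idem j *m Q^T.
  by rewrite !trmx_mul trmxK tr_diag_mx mulmxA.
split=> [|j]; last by rewrite ffunE symE.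
split=> [j|j i|j|j l jl|]; rewrite ?ffunE.
- apply: contraNneq (block_idem_neq0 j) => QDQ0.
  have <- : Q^T *m (Q *m block_idem j *m Q^T) *m Q = block_idem j.
    by rewrite !mulmxA QTQ mul1mx -mulmxA QTQ mulmx1.
  by rewrite QDQ0 mulmx0 mul0mx.
- rewrite trmx_mul symA symE.
  have QDQA : Q *m block_idem j *m Q^T *m A i
            = Q *m (block_idem j *m (Q^T *m A i *m Q)) *m Q^T.
    by rewrite !mulmxA -(mulmxA _ Q Q^T) QQT mulmx1.
  have AQDQ : A i *m (Q *m block_idem j *m Q^T)
            = Q *m ((Q^T *m A i *m Q) *m block_idem j) *m Q^T.
    by rewrite !mulmxA QQT mul1mx.
  by rewrite QDQA AQDQ block_idem_comm.
- by rewrite conjM block_idem_idem.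
- by rewrite conjM block_idem_orth // mulmx0 mul0mx.
- under eq_bigr do rewrite ffunE.
  by rewrite -mulmx_suml -mulmx_sumr sum_block_idem mulmx1 QQT.
Qed.

End BlockDiagonalToIdempotents.

Section IdempotentsToBlockDiagonal.
Variables (R : realType) (n m t : nat) (A : 'I_m -> 'M[R]_n).
Hypothesis symA : forall i, (A i)^T = A i.
Variable eps : {ffun 'I_t -> 'M[R]_n}.
Hypotheses (eps_ocsoi : is_ocsoi A eps) (sym_eps : forall j, (eps j)^T = eps j).
Variables (ns : 'I_t -> nat) (B : forall j, 'M[R]_(ns j, n)).
Hypotheses (BBT : forall j, B j *m (B j)^T = 1%:M)
  (BTB : forall j, (B j)^T *m B j = eps j).

Lemma factor_rows_gt0 j : (0 < ns j)%N.
Proof.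
case: eps_ocsoi => eps_neq0 _ _ _ _; rewrite lt0n; apply: contra (eps_neq0 j) => /eqP ns0.
by rewrite -BTB; move: (B j); rewrite ns0 => B0; rewrite flatmx0 trmx0 mul0mx.
Qed.

(* ns j is the trace of eps j, and the eps j sum to the identity. *)
Lemma sum_factor_rows : (\sum_(j < t) ns j)%N = n.
Proof.
case: eps_ocsoi => _ _ _ _ sum1; apply/eqP; rewrite -(eqr_nat R) natr_sum.
have -> : \sum_(j < t) (ns j)%:R = \sum_(j < t) \tr (eps j) :> R.
  by apply: eq_bigr => j _; rewrite -BTB mxtrace_mulC BBT mxtrace1.
by rewrite -raddf_sum sum1; apply/eqP; exact: mxtrace1.
Qed.

Lemma factor_eps j : B j *m eps j = B j.
Proof. by rewrite -BTB mulmxA BBT mul1mx. Qed.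

Lemma factor_cross (M : 'M[R]_n) j l :
  eps j *m M *m eps l = 0 -> B j *m M *m (B l)^T = 0.
Proof.
move=> epsM0; rewrite -factor_eps -[(B l)^T]trmxK -(factor_eps l) trmx_mul trmxK sym_eps.
by rewrite !mulmxA -(mulmxA (B j)) -(mulmxA (B j)) epsM0 mulmx0 mul0mx.
Qed.

Let stacked : 'M[R]_(\sum_(j < t) ns j, n) := \mxcol_j B j.
(* the columns of Q are the rows of the B j, in order *)
Let Q : 'M[R]_n := \matrix_(a, r) stacked (block_cast sum_factor_rows r) a.

Lemma conj_QE (M : 'M[R]_n) r c :
  (Q^T *m M *m Q) r c
  = (B (tagnat.sig1 (block_cast sum_factor_rows r)) *m M
       *m (B (tagnat.sig1 (block_cast sum_factor_rows c)))^T)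
      (tagnat.sig2 (block_cast sum_factor_rows r))
      (tagnat.sig2 (block_cast sum_factor_rows c)).
Proof.
rewrite !mxE; apply: eq_bigr => k _; rewrite !mxE; congr (_ * _).
by apply: eq_bigr => a _; rewrite !mxE.
Qed.

Lemma factor_gram j l (k : 'I_(ns j)) (k' : 'I_(ns l)) :
  (B j *m (B l)^T) k k' = ((j == l) && (k == k' :> nat))%:R.
Proof.
have [jl|jl] := eqVneq j l; first by subst l; rewrite BBT !mxE.
case: eps_ocsoi => _ _ _ orth _.
by rewrite -[B j]mulmx1 factor_cross ?mulmx1 ?orth // mxE.
Qed.

Lemma Q_orthogonal : Q^T *m Q = 1%:M.
Proof.
apply/matrixP => r c; rewrite -[Q^T]mulmx1 conj_QE mulmx1 factor_gram.
by rewrite -tagnat.eq_Rank !tagnat.sig2K !mxE.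
Qed.

Lemma Q_block_diag i : block_diag ns (Q^T *m A i *m Q).
Proof.
move=> r c; rewrite conj_QE => Arc_neq0.
exists (block_of sum_factor_rows r); split; first exact: in_block_of.
have -> : block_of sum_factor_rows r = block_of sum_factor_rows c.
  apply/eqP; apply: contraNT Arc_neq0 => rc; rewrite factor_cross ?mxE //.
  case: eps_ocsoi => _ cen _ orth _.
  by rewrite (center_sym_comm (symA i) (sym_eps _) (cen _ i)) -mulmxA orth ?mulmx0.
exact: in_block_of.
Qed.

Lemma factors_block_diag : exists Q : 'M[R]_n,
  [/\ Q^T *m Q = 1%:M, (forall j, (0 < ns j)%N), (\sum_(j < t) ns j)%N = n
    & forall i, block_diag ns (Q^T *m A i *m Q)].
Proof.
exists Q; split; [exact: Q_orthogonal | exact: factor_rows_gt0 |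
  exact: sum_factor_rows | exact: Q_block_diag].
Qed.

End IdempotentsToBlockDiagonal.

Lemma sym_idem_factors (R : realType) (n t : nat) (E : 'I_t -> 'M[R]_n) :
  (forall j, (E j)^T = E j) -> (forall j, E j *m E j = E j) ->
  exists (ns : 'I_t -> nat) (B : forall j, 'M[R]_(ns j, n)),
    (forall j, B j *m (B j)^T = 1%:M) /\ (forall j, (B j)^T *m B j = E j).
Proof.
move=> symE idemE.
have factor j : exists p : {r : nat & 'M[R]_(r, n)},
    tagged p *m (tagged p)^T = 1%:M /\ (tagged p)^T *m tagged p = E j.
  have [r [B BB]] := sym_idem_factor (symE j) (idemE j).
  by exists (Tagged (fun r => 'M[R]_(r, n)) B).
pose f j := proj1_sig (constructive_indefinite_description _ (factor j)).
have fP j := proj2_sig (constructive_indefinite_description _ (factor j)).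
by exists (fun j => tag (f j)), (fun j => tagged (f j)); split=> j; case: (fP j).
Qed.

Lemma ocsoi_block_diag (R : realType) (n m t : nat) (A : 'I_m -> 'M[R]_n)
    (eps : {ffun 'I_t -> 'M[R]_n}) :
  (forall i, (A i)^T = A i) -> is_ocsoi A eps -> (forall j, (eps j)^T = eps j) ->
  exists (Q : 'M[R]_n) (ns : 'I_t -> nat),
    [/\ Q^T *m Q = 1%:M, (forall j, (0 < ns j)%N), (\sum_(j < t) ns j)%N = n
      & forall i, block_diag ns (Q^T *m A i *m Q)].
Proof.
move=> symA eps_ocsoi sym_eps; have [_ _ idem _ _] := eps_ocsoi.
have [ns [B [BBT BTB]]] := sym_idem_factors sym_eps idem.
have [Q QP] := factors_block_diag symA eps_ocsoi sym_eps BBT BTB.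
by exists Q, ns.
Qed.

Theorem mainTheorem5 (R : realType) (n m t : nat) (A : 'I_m -> 'M[R]_n)
  (symA : forall i, (A i)^T = A i) (t_ge1 : (1 <= t)%N) :
  ((forall Vs : {ffun 'I_t -> {vspace 'cV[R]_n}}, is_oosbd A Vs ->
      is_ocsoi A (proj_tuple Vs) /\ (forall j, (proj_tuple Vs j)^T = proj_tuple Vs j))
   /\ (forall Vs Ws : {ffun 'I_t -> {vspace 'cV[R]_n}}, is_oosbd A Vs -> is_oosbd A Ws ->
      proj_tuple Vs = proj_tuple Ws -> Vs = Ws)
   /\ (forall eps : {ffun 'I_t -> 'M[R]_n}, is_ocsoi A eps ->
      (forall j, (eps j)^T = eps j) ->
      exists Vs : {ffun 'I_t -> {vspace 'cV[R]_n}}, is_oosbd A Vs /\ proj_tuple Vs = eps))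
  /\
  ((exists (Q : 'M[R]_n) (ns : 'I_t -> nat),
      [/\ Q^T *m Q = 1%:M, (forall j, (0 < ns j)%N), (\sum_(j < t) ns j)%N = n
        & forall i, block_diag ns (Q^T *m A i *m Q)])
   <->
   (exists eps : {ffun 'I_t -> 'M[R]_n}, is_ocsoi A eps /\ (forall j, (eps j)^T = eps j))).
Proof.
split; first split; [|split|split].
- by move=> Vs; exact: oosbd_proj_tuple.
- by move=> Vs Ws _ _; exact: proj_tuple_inj.
- by move=> eps; exact: ocsoi_oosbd.
- by case=> Q [ns [QTQ ns_gt0 sum_ns Ablock]]; exact: block_diag_ocsoi QTQ ns_gt0 sum_ns Ablock.
- by case=> eps [eps_ocsoi sym_eps]; exact: ocsoi_block_diag symA eps_ocsoi sym_eps.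
Qed.
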